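(* Let $(X,\Sigma)$ be a measurable space, $(\mathcal{E}_t)_{t\ge0}$ a process of pavings, $\boldsymbol{\mu}=(\mu_t)_{t\ge0}$ a family of monotone measures on $\Sigma$, and $\mathscr{A}=\{\mathsf{A}_t(\cdot|E)\colon E\in\mathcal{E}_t,\,t\ge0\}$ an idempotent parametric family of conditional aggregation operators. Then for every $\lambda>0$ and every $t\ge0$, $$\boldsymbol{\mu}_{\mathscr{A}}(\lambda\mathbf{1}_X,t)=\sup\{\mu_t(E)\colon E\in\mathcal{E}_t\}\cdot\mathbf{1}_{[0,\lambda]}(t).$$ In particular, $\boldsymbol{\mu}_{\mathscr{A}}(\lambda\mathbf{1}_X,t)=\mu_t(X)\mathbf{1}_{[0,\lambda]}(t)$ if $X\in\mathcal{E}_t$.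
   Context: Convention: $\infty\cdot 0=0$. $\Sigma^0=\Sigma\setminus\{\emptyset\}$. $\mathbf{F}$ denotes the set of all $\Sigma$-measurable, nonnegative, bounded functions $f\colon X\to[0,\infty)$. A monotone measure is a map $\mu\colon\Sigma\to[0,\infty]$ with $\mu(B)\le\mu(C)$ whenever $B\subseteq C$, $\mu(\emptyset)=0$ and $\mu(X)>0$. For $E\in\Sigma^0$, a conditional aggregation operator (CAO) w.r.t. $E$ is a map $\mathsf{A}(\cdot|E)\colon\mathbf{F}\to[0,\infty]$ such that (C1) $\mathsf{A}(f|E)\le\mathsf{A}(g|E)$ whenever $f(x)\le g(x)$ for all $x\in E$, and (C2) $\mathsf{A}(\mathbf{1}_{X\setminus E}|E)=0$. A process of pavings is a family $(\mathcal{E}_t)_{t\ge0}$ with $\emptyset\in\mathcal{E}_t\subseteq\Sigma$ for all $t$; $\mathcal{E}_t^0=\mathcal{E}_t\setminus\{\emptyset\}$. A parametric family of CAOs (pFCA) $\{\mathsf{A}_t(\cdot|E)\colon E\in\mathcal{E}_t,\,t\ge0\}$ consists of CAOs $\mathsf{A}_t(\cdot|E)$ w.r.t. $E$ for each $t$ and $E\in\mathcal{E}_t^0$, with the convention $\mathsf{A}_t(\cdot|\emptyset)=\infty$. The pFCA is idempotent if $\mathsf{A}_t(b\mathbf{1}_X|E)=b$ for all $b\in(0,\infty)$, all $t\ge0$ and all $E\in\mathcal{E}_t^0$. The generalized level measure is $\boldsymbol{\mu}_{\mathscr{A}}(f,t)=\sup\{\mu_t(E)\colon \mathsf{A}_t(f|E)\ge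 t,\ E\in\mathcal{E}_t\}$ for $t\ge0$. *)

From HB Require Import structures.
From mathcomp Require Import all_boot all_order all_algebra.
From mathcomp Require Import all_classical all_reals all_analysis.
Set Implicit Arguments. Unset Strict Implicit. Unset Printing Implicit Defensive.
Import Order.TTheory GRing.Theory Num.Theory.
Local Open Scope classical_set_scope.
Local Open Scope ring_scope.

Section Defs.
Context {d : measure_display} {X : measurableType d} {R : realType}.

Definition Fset : set (X -> R) :=
  [set f : X -> R | measurable_fun setT f /\ (forall x, 0 <= f x) /\
           exists M : R, forall x, f x <= M].

Definition is_CAO (E : set X) (A : (X -> R) -> \bar R) : Prop :=
  (forall f g, Fset f -> Fset g -> (forall x, E x -> f x <= g x) ->
     (A f <= A g)%E) /\
  A (\1_(~` E) : X -> R) = 0%E.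

Definition process_of_pavings (Ep : R -> set (set X)) : Prop :=
  forall t, 0 <= t -> Ep t set0 /\ (forall B, Ep t B -> measurable B).

Definition monotone_measure (m : set X -> \bar R) : Prop :=
  (forall B C, measurable B -> measurable C -> B `<=` C -> (m B <= m C)%E) /\
  m set0 = 0%E /\ (0 < m setT)%E.

Definition pFCA (Ep : R -> set (set X)) (A : R -> set X -> (X -> R) -> \bar R)
  : Prop :=
  forall t, 0 <= t ->
    (forall E, Ep t E -> E <> set0 -> is_CAO E (A t E)) /\
    (forall f, A t set0 f = +oo%E).

Definition idempotent_pFCA (Ep : R -> set (set X))
  (A : R -> set X -> (X -> R) -> \bar R) : Prop :=
  forall b : R, 0 < b -> forall t, 0 <= t ->
    forall E, Ep t E -> E <> set0 -> A t E (cst b) = b%:E.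

Definition gen_level_measure (mu : R -> set X -> \bar R)
  (Ep : R -> set (set X)) (A : R -> set X -> (X -> R) -> \bar R)
  (f : X -> R) (t : R) : \bar R :=
  ereal_sup [set mu t E | E in [set E | Ep t E /\ (t%:E <= A t E f)%E]].

End Defs.

From HB Require Import structures.
From mathcomp Require Import all_boot all_order all_algebra.
From mathcomp Require Import all_classical all_reals all_analysis.
Import Order.TTheory GRing.Theory Num.Theory.
Local Open Scope classical_set_scope.
Local Open Scope ring_scope.

(* By idempotency, A_t(lam 1_X | E) = lam for every nonempty E in the paving,
   while A_t(. | emptyset) = +oo.  So the level condition t <= A_t(lam 1_X | E)
   admits all of E_t when t <= lam and only the empty set when t > lam; in the
   latter case the supremum is mu_t(emptyset) = 0. *)

Lemma ereal_sup_image_max {T : Type} {R : realType} {P : set T}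
    {f : T -> \bar R} {C : T} :
  P C -> (forall E, P E -> (f E <= f C)%E) ->
  ereal_sup [set f E | E in P] = f C.
Proof.
move=> PC fC; apply/eqP; rewrite eq_le; apply/andP; split.
  by apply: ge_ereal_sup => _ [E PE <-]; exact: fC.
by apply: ereal_sup_ubound; exists C.
Qed.

Section level_measure_of_constant.
Context {d : measure_display} {X : measurableType d} {R : realType}.
Context {Ep : R -> set (set X)} {A : R -> set X -> (X -> R) -> \bar R}.
Hypotheses (hA : pFCA Ep A) (hI : idempotent_pFCA Ep A).
Context {lam t : R}.
Hypotheses (lam_gt0 : 0 < lam) (t_ge0 : 0 <= t).

Lemma pFCA_cst_level (E : set X) : Ep t E ->
  (t%:E <= A t E (cst lam))%E <-> E = set0 \/ t <= lam.
Proof.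
move=> EtE; have [->|/eqP E0] := eqVneq E set0.
  by have [_ ->] := hA t t_ge0; rewrite leey; split => // _; left.
by rewrite hI // lee_fin; split => [tlam|[/E0|//]]; [right|].
Qed.

Lemma gen_level_measure_cst_le (mu : R -> set X -> \bar R) : t <= lam ->
  gen_level_measure mu Ep A (cst lam) t = ereal_sup [set mu t E | E in Ep t].
Proof.
move=> tlam; rewrite /gen_level_measure; congr (ereal_sup (image _ _)).
apply/seteqP; split => [E []//|E EtE].
by split => //; apply/pFCA_cst_level => //; right.
Qed.

Lemma gen_level_measure_cst_gt (mu : R -> set X -> \bar R) :
  Ep t set0 -> lam < t ->
  gen_level_measure mu Ep A (cst lam) t = mu t set0.
Proof.
move=> Et0 lamt; rewrite /gen_level_measure.
suff -> : [set E | Ep t E /\ (t%:E <= A t E (cst lam))%E] = [set set0].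
  by rewrite image_set1 ereal_sup1.
apply/seteqP; split => [E [EtE /(pFCA_cst_level _ EtE)]|_ ->].
  by case=> // tlam; move: (lt_le_trans lamt tlam); rewrite ltxx.
by split => //; apply/pFCA_cst_level => //; left.
Qed.

End level_measure_of_constant.

Theorem proposition3p8 (d : measure_display) (X : measurableType d)
  (R : realType) (Ep : R -> set (set X)) (mu : R -> set X -> \bar R)
  (A : R -> set X -> (X -> R) -> \bar R) :
  process_of_pavings Ep ->
  (forall t, 0 <= t -> monotone_measure (mu t)) ->
  pFCA Ep A -> idempotent_pFCA Ep A ->
  forall lam : R, 0 < lam -> forall t : R, 0 <= t ->
    gen_level_measure mu Ep A (cst lam) t
      = (ereal_sup [set mu t E | E in Ep t] * (\1_(`[0, lam]) t : R)%:E)%E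
    /\ (Ep t setT ->
        gen_level_measure mu Ep A (cst lam) t
          = (mu t setT * (\1_(`[0, lam]) t : R)%:E)%E).
Proof.
move=> hP hmu hA hI lam lam_gt0 t t_ge0.
have [Et0 Etm] := hP t t_ge0.
have [mu_mono [mu0 _]] := hmu t t_ge0.
have level : gen_level_measure mu Ep A (cst lam) t
    = (ereal_sup [set mu t E | E in Ep t] * (\1_(`[0, lam]) t : R)%:E)%E.
  rewrite indicE; have [tlam|lamt] := leP t lam.
    rewrite (gen_level_measure_cst_le hA hI lam_gt0 t_ge0 mu tlam).
    rewrite mem_set ?mule1 //.
    by rewrite /= in_itv /= t_ge0 tlam.
  rewrite (gen_level_measure_cst_gt hA hI lam_gt0 t_ge0 mu Et0 lamt) mu0.
  by rewrite memNset ?mule0 // /= in_itv /= t_ge0 leNgt lamt.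
split=> // EtT; rewrite level (ereal_sup_image_max (f := mu t) EtT) // => E EtE.
by apply: mu_mono => //; exact: Etm.
Qed.
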